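(* Let $n=2m$. Let $S_1=\{\bm{v}\in\mathbb{F}_{q^n}^n:\mathcal{P}_n(\bm{v})\in GL_n(\mathbb{F}_{q^n})\}$ and $S_2=\{\bm{v}\in\mathbb{F}_{q^m}^n:\mathcal{P}_n(\bm{v})\in GL_n(\mathbb{F}_{q^m})\}$. Let $T=\{\bm{v}\in\mathbb{F}_{q^n}^n:\mathrm{wt}_{q^m}(\bm{v})=2\text{ and }\mathcal{P}_n(\bm{v})\in GL_n(\mathbb{F}_{q^n})\}$ and let $\mathcal{N}$ be the number of distinct equivalence classes $\overline{\bm{v}}$ with $\bm{v}\in T$. Then $$\mathcal{N}=\frac{|S_1|}{|S_2|}-q^m-1.$$
   Context: $q$ is a prime power (the paper takes $q$ a power of $2$). For $\bm{v}=(v_0,\dots,v_{n-1})$, the circulant matrix $\mathcal{P}_n(\bm{v})$ is the $n\times n$ matrix with rows $(v_0,\dots,v_{n-1}),(v_{n-1},v_0,\dots,v_{n-2}),\dots,(v_1,\dots,v_{n-1},v_0)$ (each row the cyclic right shift of the previous one). $\mathcal{P}_n(\mathbb{F}_{q^m})$ denotes the set of $n\times n$ circulant matrices over $\mathbb{F}_{q^m}$. For $\bm{v}\in\mathbb{F}_{q^n}^n$, $\mathrm{wt}_{q^m}(\bm{v})$ is the dimension over $\mathbb{F}_{q^m}$ of the $\mathbb{F}_{q^m}$-linear span of the components of $\bm{v}$ (so it is $0,1$ or $2$). The equivalence class of $\bm{v}\in\mathbb{F}_{q^n}^n$ is $\overline{\bm{v}}=\{\bm{v}Q: Q\in\mathcal{P}_n(\mathbb{F}_{q^m})\cap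 GL_n(\mathbb{F}_{q^m})\}$. *)

From HB Require Import structures.
From mathcomp Require Import all_boot all_order all_algebra all_field.
Set Implicit Arguments. Unset Strict Implicit. Unset Printing Implicit Defensive.
Import GRing.Theory.
Local Open Scope ring_scope.

Section Defs.
Variable L : finFieldType.

(* The subfield F_{q^m} of L = F_{q^n} (n = 2m): elements fixed by x |-> x^(q^m). *)
Definition subF (qm : nat) : pred L := fun x => x ^+ qm == x.

(* circulant matrix P_n(v): entry (i,j) = v_{(j - i) mod n};
   row 0 is v, each row is the cyclic right shift of the previous one. *)
Definition cidx (n : nat) (i j : 'I_n) : 'I_n :=
  Ordinal (ltn_pmod (j + n - i) (leq_ltn_trans (leq0n i) (ltn_ord i))).
Definition circ (n : nat) (v : 'rV[L]_n) : 'M[L]_n :=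
  \matrix_(i < n, j < n) v 0 (cidx i j).

Definition mxin (K : pred L) (r c : nat) (A : 'M[L]_(r, c)) : bool :=
  [forall i, forall j, K (A i j)].

Definition GLin (K : pred L) (n : nat) (A : 'M[L]_n) : bool :=
  mxin K A && [exists B : 'M[L]_n, [&& mxin K B, A *m B == 1%:M & B *m A == 1%:M]].

Definition spans (K : pred L) (n r : nat) (v : 'rV[L]_n) : bool :=
  [exists b : {ffun 'I_r -> L}, forall i : 'I_n,
     exists c : {ffun 'I_r -> L},
       [forall j, K (c j)] && (v 0 i == \sum_(j < r) c j * b j)].

(* wt_K(v) = dimension over K of the K-span of the components of v
   = least r such that the span is spanned by r elements (r <= n always works) *)
Definition wt (K : pred L) (n : nat) (v : 'rV[L]_n) : nat :=
  find (fun r => spans K r v) (iota 0 n.+1).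

Definition eqclass (K : pred L) (n : nat) (v : 'rV[L]_n) : {set 'rV[L]_n} :=
  [set v *m circ u | u in [set u : 'rV[L]_n | mxin K u && GLin K (circ u)]].

End Defs.

From HB Require Import structures.
From mathcomp Require Import all_boot all_order all_algebra all_field.
From mathcomp Require Import zify ring.
Set Implicit Arguments. Unset Strict Implicit. Unset Printing Implicit Defensive.
Import GRing.Theory Num.Theory.
Local Open Scope ring_scope.

(* Proposition 7.  Let L be a finite field with |L| = Q^2, where Q = q^m is a
   power of the characteristic, and K = {x | x^Q = x}.
   - K is a subfield (the fixed field of the Q-th power Frobenius) with exactly
     Q elements: x |-> x^Q - x is additive with kernel K and its image consists
     of roots of X^Q + X.  Hence L = K + K alpha for any alpha outside K, so
     wt_K(v) <= 2 always and wt_K(v) = 2 iff v is not L-proportional to a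
     K-vector.
   - Circulants commute and circ (u *m circ w) = circ u *m circ w, so
     S_2 = {K-vectors with invertible circulant} is a group acting freely on
     S_1 by v |-> v *m circ u; the equivalence classes are the orbits.
   - S_1 splits into A (weight <= 1) and T (weight 2).  T is a union of N
     orbits of size |S_2|, while (c, w) |-> c *: w maps L^* x S_2 onto A with
     fibers of size |K^*| = Q - 1, so |A| = (Q + 1) |S_2|.
   Hence N = |S_1| / |S_2| - Q - 1, for every length n >= 2. *)

Lemma card_uniform_fibers (T U : finType) (X : {set T}) (f : T -> U) (k : nat) :
  (forall x, x \in X -> #|[set y in X | f y == f x]| = k) ->
  #|X| = (#|f @: X| * k)%N.
Proof.
move=> fibk; rewrite -sum1_card (partition_big f (mem (f @: X))) /=; last first.
  by move=> x Xx; apply: imset_f.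
rewrite -sum_nat_const; apply: eq_bigr => _ /imsetP [x Xx ->].
by rewrite -(fibk x Xx) -sum1_card; apply: eq_bigl => y; rewrite inE.
Qed.

Section MatricesOverSubfield.
Variables (F : fieldType) (S : divringClosed F).

Lemma det_mxOver k (A : 'M[F]_k) : A \is a mxOver S -> \det A \in S.
Proof.
move=> /mxOverP AS; rewrite rpred_sum // => s _.
by rewrite rpredM ?rpred_prod ?rpredX ?rpredN ?rpred1.
Qed.

Lemma invmx_mxOver k (A : 'M[F]_k) : A \is a mxOver S -> invmx A \is a mxOver S.
Proof.
move=> AS; rewrite /invmx; case: ifP => // _.
rewrite mxOverZ ?rpredV ?det_mxOver //; apply/mxOverP => i j.
rewrite mxE /cofactor rpredM ?rpredX ?rpredN ?rpred1 // det_mxOver //.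
by apply/mxOverP => a b; rewrite !mxE (mxOverP AS).
Qed.

End MatricesOverSubfield.

Lemma mxinE (L : finFieldType) (S : pred L) r c (A : 'M[L]_(r, c)) :
  mxin S A = (A \is a mxOver S).
Proof. by []. Qed.

Section Circulants.
Variables (L : finFieldType) (n' : nat).
Local Notation n := n'.+1.
Implicit Types u v w : 'rV[L]_n.

Lemma circE v i j : circ v i j = v 0 (j - i).
Proof.
rewrite mxE; congr (v 0 _); apply: val_inj.
by rewrite /= modnDmr addnBA // ltnW.
Qed.

(* circ turns cyclic convolution into matrix product. *)
Lemma circ_mul u w : circ (u *m circ w) = circ u *m circ w.
Proof.
apply/matrixP => i j; rewrite circE !mxE.
rewrite [RHS](reindex_inj (addIr i)); apply: eq_bigr => k _.
by rewrite !circE addrK opprD addrA addrAC.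
Qed.

(* Circulant matrices commute (reindex the sum by k |-> i + j - k). *)
Lemma circ_comm u w : circ u *m circ w = circ w *m circ u.
Proof.
apply/matrixP => i j; rewrite !mxE.
have flip_inv : involutive (fun k : 'I_n => i + j - k).
  by move=> k; rewrite opprB addrC subrK.
rewrite [RHS](reindex_inj (inv_inj flip_inv)); apply: eq_bigr => k _.
rewrite !circE mulrC; congr (w 0 _ * u 0 _).
  by rewrite addrAC [i + j]addrC addrK.
by rewrite opprB addrCA [i + j]addrC opprD addNKr.
Qed.

Lemma row0_circ v : row 0 (circ v) = v.
Proof. by apply/rowP => j; rewrite mxE circE subr0. Qed.

Lemma mul_circC u w : u *m circ w = w *m circ u.
Proof. by rewrite -{1}[u]row0_circ -row_mul circ_comm row_mul row0_circ. Qed.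

Lemma circ_delta0 : circ (delta_mx 0 0 : 'rV[L]_n) = 1%:M.
Proof. by apply/matrixP => i j; rewrite circE !mxE eqxx /= subr_eq0 eq_sym. Qed.

Lemma circZ c v : circ (c *: v) = c *: circ v.
Proof. by apply/matrixP => i j; rewrite [RHS]mxE !circE mxE. Qed.

Lemma circ0_nonunit : (circ (0 : 'rV[L]_n) \in unitmx) = false.
Proof. by rewrite -(scale0r 0) circZ scale0r unitmxE det0 unitr0. Qed.

Lemma circ_mxOver (S : {pred L}) v : v \is a mxOver S -> circ v \is a mxOver S.
Proof. by move=> /mxOverP Sv; apply/mxOverP => i j; rewrite circE. Qed.

End Circulants.

Section FixedField.
Variables (L : finFieldType) (Q : nat).
Hypothesis Qnat : [pchar L].-nat Q.
Local Notation K := (@subF L Q).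

Lemma subFP x : reflect (x ^+ Q = x) (x \in K).
Proof. exact: eqP. Qed.

(* x |-> x^Q is a field endomorphism, so its fixed points form a subfield. *)
Lemma subF_divring_closed : divring_closed K.
Proof.
split; first by apply/subFP; rewrite expr1n.
  move=> x y /subFP Kx /subFP Ky; apply/subFP.
  by rewrite exprDn_pchar // exprNn_pchar // Kx Ky.
by move=> x y /subFP Kx /subFP Ky; apply/subFP; rewrite exprMn exprVn Kx Ky.
Qed.

HB.instance Definition _ := GRing.isDivringClosed.Build L K subF_divring_closed.

Section QuadraticExtension.
Hypothesis cardL : #|L| = (Q * Q)%N.

(* A field has at least two elements, so Q > 1. *)
Lemma Q_gt1 : (1 < Q)%N.
Proof. by have := finNzRing_gt1 L; rewrite cardL; case: Q => [|[]]. Qed.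

Lemma card_binomial_roots (c : L) : (#|[set x : L | (x ^+ Q == c * x)%R]| <= Q)%N.
Proof.
have size_p : size ('X^Q - c *: 'X : {poly L}) = Q.+1.
  rewrite size_polyDl ?size_polyXn // size_polyN.
  by rewrite (leq_ltn_trans (size_scale_leq _ _)) ?size_polyX ?ltnS ?Q_gt1.
have p_neq0 : ('X^Q - c *: 'X : {poly L}) != 0 by rewrite -size_poly_eq0 size_p.
have := max_poly_roots p_neq0 _ (enum_uniq [set x : L | (x ^+ Q == c * x)%R]).
rewrite size_p -cardE ltnS; apply; apply/allP => x; rewrite mem_enum inE.
by rewrite /root !hornerE subr_eq0.
Qed.

(* The Artin-Schreier-type map x |-> x^Q - x is additive with kernel K and
   lands in the roots of X^Q + X; counting its fibers gives |K| = Q. *)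
Lemma card_subF : #|[set x : L | x \in K]| = Q.
Proof.
pose phi x : L := x ^+ Q - x.
have phiD x y : phi (x + y) = phi x + phi y.
  by rewrite /phi exprDn_pchar //; ring.
have phiN x : phi (- x) = - phi x by rewrite /phi exprNn_pchar //; ring.
have fibers x : x \in [set: L] ->
    #|[set y in [set: L] | phi y == phi x]| = #|[set t : L | t \in K]|.
  move=> _; rewrite -[RHS](card_imset _ (addIr x)).
  apply: eq_card => y; rewrite !inE.
  apply/idP/imsetP => [phi_yx|[t Kt ->]].
    exists (y - x); last by rewrite subrK.
    by rewrite inE; apply/subFP/eqP; rewrite -subr_eq0 -/(phi _) phiD phiN subr_eq0.
  by move: Kt; rewrite inE => /subFP Kt; rewrite phiD /phi Kt subrr add0r eqxx.
have img_le : (#|phi @: [set: L]| <= Q)%N.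
  apply: leq_trans (card_binomial_roots (-1)); apply: subset_leq_card.
  apply/subsetP => _ /imsetP [x _ ->]; rewrite inE /phi.
  by rewrite exprDn_pchar // exprNn_pchar // -exprM -cardL expf_card mulN1r opprB.
have K_le : (#|[set t : L | t \in K]| <= Q)%N.
  apply: leq_trans (card_binomial_roots 1); apply: subset_leq_card.
  by apply/subsetP => x; rewrite !inE mul1r.
have := card_uniform_fibers fibers; rewrite cardsT cardL => QQ.
apply/eqP; rewrite eqn_leq K_le /=.
by rewrite -(leq_pmul2l (ltnW Q_gt1)) {1}QQ leq_mul2r img_le orbT.
Qed.

(* L is two-dimensional over K: any alpha outside K gives a basis {1, alpha}. *)
Lemma subF_basis : exists alpha : L, forall x : L,
  exists c0 c1, [/\ c0 \in K, c1 \in K & x = c0 + c1 * alpha].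
Proof.
have [alpha Kalpha] : exists alpha : L, alpha \notin K.
  apply/existsP; rewrite -negb_forall; apply: contraTN Q_gt1 => /forallP allK.
  have : #|[set x : L | x \in K]| = #|L|.
    by rewrite -cardsT; apply: eq_card => x; rewrite !inE allK.
  rewrite card_subF cardL -{1}[Q]muln1 => /eqP.
  by rewrite eqn_pmul2l ?(ltnW Q_gt1) // => /eqP <-.
pose KK := setX [set c : L | c \in K] [set c : L | c \in K].
pose g (c : L * L) := c.1 + c.2 * alpha.
have g_inj : {in KK &, injective g}.
  move=> [c0 c1] [d0 d1]; rewrite !inE /g /= => /andP [Kc0 Kc1] /andP [Kd0 Kd1] eq_g.
  have eq1 : c1 = d1.
    apply/eqP; apply: contraNT Kalpha; rewrite -subr_eq0 => neq1.
    have e : alpha * (c1 - d1) = d0 - c0.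
      by rewrite -[d0](addrK (d1 * alpha)) -eq_g; ring.
    by rewrite -[alpha](mulfK neq1) e rpredM ?rpredV ?rpredB.
  by move: eq_g; rewrite eq1 => /addIr ->.
have g_onto : g @: KK = [set: L].
  apply/eqP; rewrite eqEcard subsetT /= cardsT (card_in_imset g_inj).
  by rewrite cardsX card_subF cardL.
exists alpha => x; have : x \in g @: KK by rewrite g_onto inE.
by case/imsetP => [[c0 c1]]; rewrite !inE /= => /andP [Kc0 Kc1] ->; exists c0, c1.
Qed.

Lemma card_subF_units : #|[set t : L | (t \in K) && (t != 0)]| = (Q - 1)%N.
Proof.
rewrite -[in RHS]card_subF (cardsD1 0 [set t : L | t \in K]).
rewrite inE rpred0 add1n subn1 /=.
by apply: eq_card => t; rewrite !inE andbC.
Qed.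

Lemma scale_mxOver_subF r c (t : L) (w : 'M[L]_(r, c)) :
  w != 0 -> w \is a mxOver K -> t *: w \is a mxOver K -> t \in K.
Proof.
move=> w_neq0 /mxOverP Kw /mxOverP Ktw.
have /existsP [[i j] /= wij] : [exists ij : 'I_r * 'I_c, w ij.1 ij.2 != 0].
  apply: contraNT w_neq0; rewrite negb_exists => /forallP w0.
  by apply/eqP/matrixP => i j; move: (w0 (i, j)); rewrite mxE negbK => /eqP.
have -> : t = (t *: w) i j / w i j by rewrite mxE mulfK.
by rewrite rpred_div.
Qed.

Section Counting.
Variable n' : nat.
Local Notation n := n'.+1.
Implicit Types u v w : 'rV[L]_n.

Definition circGL := [set u : 'rV[L]_n | (u \is a mxOver K) && (circ u \in unitmx)].

Lemma GLin_circ u : u \is a mxOver K -> GLin K (circ u) = (circ u \in unitmx).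
Proof.
move=> Ku; apply/andP/idP => [[_ /existsP [B /and3P [_ /eqP uB _]]]|unit_u].
  by case: (mulmx1_unit uB).
split; first by rewrite mxinE circ_mxOver.
apply/existsP; exists (invmx (circ u)).
by rewrite mxinE invmx_mxOver ?circ_mxOver // mulmxV // mulVmx // !eqxx.
Qed.

Lemma S2E : [set v : 'rV[L]_n | mxin K v && GLin K (circ v)] = circGL.
Proof.
apply/setP => v; rewrite !inE mxinE.
by case Kv: (v \is a mxOver K) => //=; rewrite GLin_circ.
Qed.

Lemma delta0_circGL : delta_mx 0 0 \in circGL.
Proof.
rewrite inE circ_delta0 unitmx1 andbT; apply/mxOverP => i j.
by rewrite mxE; case: (_ && _); rewrite ?rpred1 ?rpred0.
Qed.

Lemma circGL_mul u w : u \in circGL -> w \in circGL -> u *m circ w \in circGL.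
Proof.
rewrite !inE => /andP [Ku unit_u] /andP [Kw unit_w].
by rewrite mxOverM ?circ_mxOver // circ_mul unitmx_mul unit_u unit_w.
Qed.

Lemma mul_circ_inj u :
  circ u \in unitmx -> injective (fun x : 'rV[L]_n => x *m circ u).
Proof. by move=> unit_u; apply: can_inj (mulmxK unit_u). Qed.

Lemma circGL_translate u : u \in circGL -> [set x *m circ u | x in circGL] = circGL.
Proof.
move=> Gu; apply/eqP; rewrite eqEcard card_in_imset; last first.
  by move=> x y _ _; apply: mul_circ_inj; move: Gu; rewrite inE => /andP [].
by rewrite leqnn andbT; apply/subsetP => _ /imsetP [x Gx ->]; apply: circGL_mul.
Qed.

Lemma eqclassE v : eqclass K v = [set v *m circ u | u in circGL].
Proof. by rewrite /eqclass S2E. Qed.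

Lemma eqclass_id v : v \in eqclass K v.
Proof.
rewrite eqclassE; apply/imsetP; exists (delta_mx 0 0); first exact: delta0_circGL.
by rewrite circ_delta0 mulmx1.
Qed.

(* Translating v by an element of circGL does not change its class, since the
   action is by a commutative group. *)
Lemma eqclass_translate v u :
  u \in circGL -> eqclass K (v *m circ u) = eqclass K v.
Proof.
move=> Gu; rewrite !eqclassE -{2}(circGL_translate Gu) -imset_comp.
by apply: eq_imset => x /=; rewrite -!mulmxA circ_mul circ_comm.
Qed.

(* The action is free on invertible vectors: every orbit there has |S_2| elements. *)
Lemma card_eqclass v : circ v \in unitmx -> #|eqclass K v| = #|circGL|.
Proof.
move=> unit_v; rewrite eqclassE card_in_imset // => x y _ _.
by rewrite !(mul_circC v); apply: mul_circ_inj.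
Qed.

Lemma spans1P v :
  reflect (exists b, exists2 w, w \is a mxOver K & v = b *: w) (spans K 1 v).
Proof.
apply: (iffP existsP) => [[b /forallP coef]|[b [w Kw ->]]]; last first.
  exists [ffun=> b]; apply/forallP => i; apply/existsP; exists [ffun=> w 0 i].
  rewrite big_ord1 !ffunE mxE mulrC eqxx andbT.
  by apply/forallP => j; rewrite ffunE; exact: (mxOverP Kw).
have coefP i : exists2 c, c \in K & v 0 i = c * b ord0.
  have /existsP [c /andP [/forallP Kc /eqP ->]] := coef i.
  by exists (c ord0); [exact: Kc | rewrite big_ord1].
have [b0|b_neq0] := eqVneq (b ord0) 0.
  exists 0; exists 0; first exact: mxOver0 (rpred0 _).
  by apply/rowP => i; have [c _ ->] := coefP i; rewrite b0 mulr0 scale0r mxE.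
exists (b ord0); exists (\row_i (v 0 i / b ord0)).
  by apply/mxOverP => i j; rewrite mxE; have [c Kc ->] := coefP j; rewrite mulfK.
by apply/rowP => i; rewrite !mxE mulrC divfK.
Qed.

(* Every vector has weight at most 2, since L = K + K alpha. *)
Lemma spans2 v : spans K 2 v.
Proof.
have [alpha basis] := subF_basis.
apply/existsP; exists [ffun j : 'I_2 => if j == 0 then 1 else alpha].
apply/forallP => i; have [c0 [c1 [Kc0 Kc1 ->]]] := basis (v 0 i).
apply/existsP; exists [ffun j : 'I_2 => if j == 0 then c0 else c1].
rewrite !big_ord_recl big_ord0 !ffunE /= mulr1 addr0 eqxx andbT.
by apply/forallP => j; rewrite ffunE; case: ifP.
Qed.

Lemma spans0_spans1 v : spans K 0 v -> spans K 1 v.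
Proof.
move=> /existsP [b /forallP coef]; apply/spans1P; exists 0; exists 0.
  exact: mxOver0 (rpred0 _).
apply/rowP => i; rewrite !mxE mul0r.
by have /existsP [c /andP [_ /eqP ->]] := coef i; rewrite big_ord0.
Qed.

Hypothesis n'_gt0 : (0 < n')%N.

Lemma wt2E v : (wt K v == 2)%N = ~~ spans K 1 v.
Proof.
rewrite /wt.
have -> : iota 0 n.+1 = [:: 0, 1, 2 & iota 3 (n.+1 - 3)]%N.
  by rewrite -{1}(subnKC (_ : 3 <= n.+1)%N) ?ltnS // iotaD.
rewrite /= spans2; case: (boolP (spans K 0 v)) => [/spans0_spans1 -> //|_].
by case: (spans K 1 v).
Qed.

Definition invertibles := [set v : 'rV[L]_n | circ v \in unitmx].
Definition weight2 := [set v : 'rV[L]_n | (wt K v == 2)%N && (circ v \in unitmx)].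
Definition weight1 := [set v in invertibles | spans K 1 v].

Lemma card_invertibles : #|invertibles| = (#|weight1| + #|weight2|)%N.
Proof.
rewrite -(cardsID [set v | spans K 1 v] invertibles); congr (_ + _)%N.
  by apply: eq_card => v; rewrite !inE.
by apply: eq_card => v; rewrite !inE wt2E andbC.
Qed.

Lemma spans1_translate v u :
  u \in circGL -> spans K 1 (v *m circ u) = spans K 1 v.
Proof.
rewrite inE => /andP [Ku unit_u]; apply/spans1P/spans1P => -[b [w Kw e]].
  exists b; exists (w *m invmx (circ u)).
    by rewrite mxOverM ?invmx_mxOver ?circ_mxOver.
  by rewrite scalemxAl -e mulmxK.
exists b; exists (w *m circ u); first by rewrite mxOverM ?circ_mxOver.
by rewrite e scalemxAl.
Qed.

Lemma eqclass_weight2 v : v \in weight2 -> eqclass K v \subset weight2.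
Proof.
rewrite inE wt2E => /andP [not_spans1 unit_v].
rewrite eqclassE; apply/subsetP => _ /imsetP [u Gu ->].
rewrite inE wt2E spans1_translate // not_spans1 circ_mul unitmx_mul unit_v.
by move: Gu; rewrite inE => /andP [].
Qed.

Lemma card_weight2 :
  #|weight2| = (#|[set eqclass K v | v in weight2]| * #|circGL|)%N.
Proof.
apply: card_uniform_fibers => v T_v.
have unit_v : circ v \in unitmx by move: T_v; rewrite inE => /andP [].
rewrite -(card_eqclass unit_v); apply: eq_card => y; rewrite inE.
apply/andP/idP => [[_ /eqP <-]|cls_y]; first exact: eqclass_id.
split; first exact: subsetP (eqclass_weight2 T_v) _ cls_y.
move: cls_y; rewrite eqclassE => /imsetP [u Gu ->].
by rewrite eqclass_translate // eqclassE.
Qed.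

Lemma weight1E : [set p.1 *: p.2 | p in setX [set~ (0 : L)] circGL] = weight1.
Proof.
apply/setP => v; apply/imsetP/idP => [[[c w]]|].
  rewrite !inE /= => /andP [c_neq0 /andP [Kw unit_w]] ->.
  rewrite circZ unitmxZ ?unitfE // unit_w /=.
  by apply/spans1P; exists c; exists w.
rewrite !inE => /andP [unit_v /spans1P [b [w Kw e]]].
have b_neq0 : b != 0.
  by apply: contraTneq unit_v => b0; rewrite e b0 scale0r circ0_nonunit.
exists (b, w) => //; rewrite !inE b_neq0 Kw /=.
by move: unit_v; rewrite e circZ unitmxZ // unitfE.
Qed.

(* The pairs (c', w') with c' *: w' = c *: w are exactly the (c / t, t *: w)
   for t in K^*, since proportional K-vectors differ by a factor from K. *)
Lemma scale_fiber c w : c != 0 -> w \in circGL ->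
  [set p in setX [set~ (0 : L)] circGL | p.1 *: p.2 == c *: w] =
  [set (c / t, t *: w) | t in [set t : L | (t \in K) && (t != 0)]].
Proof.
move=> c_neq0 Gw; have w_neq0 : w != 0.
  by apply: contraTneq Gw => ->; rewrite inE circ0_nonunit andbF.
have [Kw unit_w] : w \is a mxOver K /\ circ w \in unitmx.
  by apply/andP; rewrite inE in Gw.
apply/setP => -[c' w']; rewrite !inE /=; apply/idP/imsetP.
  move=> /andP [/andP [c'_neq0 /andP [Kw' _]] /eqP e].
  have w'E : w' = (c / c') *: w.
    by rewrite mulrC -scalerA -e scalerA mulVf // scale1r.
  exists (c / c'); last by rewrite invf_div mulrCA divff // mulr1 -w'E.
  by rewrite inE mulf_neq0 ?invr_eq0 // andbT (scale_mxOver_subF w_neq0) // -w'E.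
move=> [t]; rewrite inE => /andP [Kt t_neq0] [-> ->].
rewrite mulf_neq0 ?invr_eq0 //= mxOverZ //= circZ unitmxZ ?unitfE // unit_w.
by rewrite scalerA divfK ?eqxx.
Qed.

(* Counting L^* x S_2 along the fibers of (c, w) |-> c *: w, each of size
   Q - 1, gives |A| (Q - 1) = (Q^2 - 1) |S_2|. *)
Lemma card_weight1 : #|weight1| = ((Q + 1) * #|circGL|)%N.
Proof.
have fibers p : p \in setX [set~ (0 : L)] circGL ->
    #|[set p' in setX [set~ 0] circGL | p'.1 *: p'.2 == p.1 *: p.2]| = (Q - 1)%N.
  case: p => c w; rewrite in_setX in_setC1 /= => /andP [c_neq0 Gw].
  rewrite scale_fiber // -card_subF_units; apply: card_in_imset => t1 t2 _ _ [].
  by move/(mulfI c_neq0)/invr_inj.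
have := card_uniform_fibers fibers; rewrite weight1E cardsX cardsC1 cardL.
have -> : ((Q * Q).-1 = (Q - 1) * (Q + 1))%N by have := Q_gt1; nia.
rewrite -mulnA [(_ * (Q - 1))%N]mulnC => /eqP; rewrite eqn_pmul2l ?subn_gt0 ?Q_gt1 //.
by move=> /eqP.
Qed.

Lemma card_classes_weight2 :
  (#|[set eqclass K v | v in weight2]|%:R : rat) =
  #|invertibles|%:R / #|[set v : 'rV[L]_n | mxin K v && GLin K (circ v)]|%:R
    - Q%:R - 1.
Proof.
have G_neq0 : (#|circGL|%:R : rat) != 0.
  by rewrite pnatr_eq0 -lt0n; apply/card_gt0P; exists (delta_mx 0 0);
    apply: delta0_circGL.
rewrite S2E card_invertibles card_weight1 card_weight2 !natrD !natrM.
by move: (#|circGL|%:R : rat) G_neq0 => g g_neq0; field.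
Qed.

End Counting.

End QuadraticExtension.
End FixedField.

Theorem proposition7 (L : finFieldType) (q m : nat)
  (hq : exists k : nat, (0 < k)%N /\ q = (2 ^ k)%N)
  (hL : #|L| = (q ^ (2 * m))%N) :
  let n := (2 * m)%N in
  let K := @subF L (q ^ m) in
  let S1 := [set v : 'rV[L]_n | circ v \in unitmx] in
  let S2 := [set v : 'rV[L]_n | mxin K v && GLin K (circ v)] in
  let T := [set v : 'rV[L]_n | (wt K v == 2)%N && (circ v \in unitmx)] in
  let N := #|[set eqclass K v | v in T]| in
  (N%:R : rat) = (#|S1|%:R / #|S2|%:R) - (q ^ m)%:R - 1.
Proof.
case: hq => k [_ ->] in hL *; move: hL.
case: m => [|m'] cardL; first by have := finNzRing_gt1 L; rewrite cardL.
have ch2 : 2%N \in [pchar L].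
  by apply: (@card_finPcharP _ _ (k * (2 * m'.+1))); rewrite // expnM.
have Qnat : [pchar L].-nat ((2 ^ k) ^ m'.+1)%N.
  by rewrite !pnatX (pnatE _ (isT : prime 2)) ch2.
have cardL' : #|L| = ((2 ^ k) ^ m'.+1 * (2 ^ k) ^ m'.+1)%N.
  by rewrite cardL -expnD addnn -mul2n.
have n'_gt0 : (0 < (2 * m'.+1).-1)%N by rewrite mulnS.
have -> : (2 * m'.+1)%N = (2 * m'.+1).-1.+1 by [].
exact: (card_classes_weight2 Qnat cardL' n'_gt0).
Qed.
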